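(* Let $H$ be a bialgebra over a commutative ring $\Bbbk$ and $A$ a right $H$-comodule algebra, with coaction $a\mapsto a^{(1)}\otimes a^{(2)}\in A\otimes H$. Then the maps $\Phi:(H^{\otimes n})^\vee\to\mathrm{Hom}_\Bbbk(A^{\otimes n},A)$ sending $f:H^{\otimes n}\to\Bbbk$ to $F(a_1\otimes\dots\otimes a_n)=a_1^{(1)}\cdots a_n^{(1)}f(a_1^{(2)}\otimes\dots\otimes a_n^{(2)})$ define a morphism of linear operads with multiplication from the operad $\mathcal{O}^H$ (whose cochain complex is $B(H)^\vee$) to the endomorphism operad $\mathcal{E}nd(A)$. In particular $\Phi$ induces a morphism of Gerstenhaber algebras $H^*(\Phi):\mathrm{Ext}^*_H(\Bbbk,\Bbbk)\to HH^*(A,A)$.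
   Context: A right $H$-comodule algebra is an algebra $A$ with a right $H$-coaction that is an algebra morphism $A\to A\otimes H$. $\mathcal{O}^H(n)=\mathrm{Hom}(H^{\otimes n},\Bbbk)$ with $(f\circ_ig)(a_1\otimes\dots\otimes a_{m+n-1})=f(a_1\otimes\dots\otimes a_{i-1}\otimes a_i^{(1)}\cdots a_{i+n-1}^{(1)}g(a_i^{(2)}\otimes\dots\otimes a_{i+n-1}^{(2)})\otimes a_{i+n}\otimes\dots\otimes a_{m+n-1})$ (coproduct $\Delta a=a^{(1)}\otimes a^{(2)}$ in $H$), identity $\varepsilon$, multiplication $\varepsilon\circ\mu_H$, $e=\mathrm{id}_\Bbbk$. $\mathcal{E}nd(A)(n)=\mathrm{Hom}(A^{\otimes n},A)$ with $\gamma(f;g_1,\dots,g_n)=f\circ(g_1\otimes\dots\otimes g_n)$, identity $\mathrm{id}_A$, multiplication the product of $A$, $e$ the unit. For an operad with multiplication, cohomology of the cochain complex ($df=\mu\circ_2f+\sum_i(-1)^if\circ_i\mu+(-1)^{n+1}\mu\circ_1f$) is a Gerstenhaber algebra with cup product $(\mu\circ_1f)\circ_{m+1}g$ and bracket $\{f,g\}=f\bar\circ g-(-1)^{(m-1)(n-1)}g\bar\circ f$, $f\bar\circ g=(-1)^{(m-1)(n-1)}\sum_i(-1)^{(n-1)(i-1)}f\circ_ig$; for $\mathcal{O}^H$ this gives $\mathrm{Ext}^*_H(\Bbbk,\Bbbk)$ and for $\mathcal{E}nd(A)$ it gives $HH^*(A,A)$. *)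

From HB Require Import structures.
From mathcomp Require Import all_boot all_order all_algebra.
Set Implicit Arguments.
Unset Strict Implicit.
Unset Printing Implicit Defensive.
Import Order.TTheory GRing.Theory Num.Theory.
Local Open Scope ring_scope.

(* Tensor products.  An element of M (x) N is encoded by a finite formal sum *)
(* of pure tensors (a list of pairs); two such lists denote the same tensor *)
(* iff they have the same image under every bilinear map to every module    *)
(* (this is exactly equality in the tensor product M (x)_k N).              *)

Section Tensors.
Variable R : comPzRingType.

Definition bilin (M N P : lmodType R) (b : M -> N -> P) : Prop :=
  (forall r x x' y, b (r *: x + x') y = r *: b x y + b x' y) /\
  (forall r x y y', b x (r *: y + y') = r *: b x y + b x y').

Definition trilin (M N Q P : lmodType R) (t : M -> N -> Q -> P) : Prop :=
  [/\ (forall r x x' y z, t (r *: x + x') y z = r *: t x y z + t x' y z),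
      (forall r x y y' z, t x (r *: y + y') z = r *: t x y z + t x y' z)
    & (forall r x y z z', t x y (r *: z + z') = r *: t x y z + t x y z')].

Definition teq2 (M N : lmodType R) (s t : seq (M * N)) : Prop :=
  forall (P : lmodType R) (b : M -> N -> P), bilin b ->
    \sum_(x <- s) b x.1 x.2 = \sum_(x <- t) b x.1 x.2.

Definition teq3 (M N Q : lmodType R) (s t : seq (M * N * Q)) : Prop :=
  forall (P : lmodType R) (b : M -> N -> Q -> P), trilin b ->
    \sum_(x <- s) b x.1.1 x.1.2 x.2 = \sum_(x <- t) b x.1.1 x.1.2 x.2.

Record is_bialgebra (H : algType R) (Delta : H -> seq (H * H)) (eps : H -> R)
  : Prop := {
  Delta_lin : forall r a b, teq2 (Delta (r *: a + b))
                 ([seq (r *: x.1, x.2) | x <- Delta a] ++ Delta b);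
  Delta_coassoc : forall a,
    teq3 (flatten [seq [seq (y.1, y.2, x.2) | y <- Delta x.1] | x <- Delta a])
         (flatten [seq [seq (x.1, z.1, z.2) | z <- Delta x.2] | x <- Delta a]);
  counit_l : forall a, \sum_(x <- Delta a) eps x.1 *: x.2 = a;
  counit_r : forall a, \sum_(x <- Delta a) eps x.2 *: x.1 = a;
  Delta_mul : forall a b, teq2 (Delta (a * b))
                 [seq (x.1 * y.1, x.2 * y.2) | x <- Delta a, y <- Delta b];
  Delta_one : teq2 (Delta 1) [:: (1, 1)];
  eps_lin : forall r a b, eps (r *: a + b) = r * eps a + eps b;
  eps_mul : forall a b, eps (a * b) = eps a * eps b;
  eps_one : eps 1 = 1 }.

Record is_comodule_algebra (H A : algType R) (Delta : H -> seq (H * H))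
  (eps : H -> R) (rho : A -> seq (A * H)) : Prop := {
  rho_lin : forall r a b, teq2 (rho (r *: a + b))
                 ([seq (r *: x.1, x.2) | x <- rho a] ++ rho b);
  rho_coassoc : forall a,
    teq3 (flatten [seq [seq (y.1, y.2, x.2) | y <- rho x.1] | x <- rho a])
         (flatten [seq [seq (x.1, z.1, z.2) | z <- Delta x.2] | x <- rho a]);
  rho_counit : forall a, \sum_(x <- rho a) eps x.2 *: x.1 = a;
  rho_mul : forall a b, teq2 (rho (a * b))
                 [seq (x.1 * y.1, x.2 * y.2) | x <- rho a, y <- rho b];
  rho_one : teq2 (rho 1) [:: (1, 1)] }.

End Tensors.

(* n-ary cochains.  Hom(M^{(x) n}, V) is represented by maps seq M -> V     *)
(* that are multilinear on lists of length n (values on other lengths are   *)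
(* irrelevant; all equalities below are only asserted on lists of the right *)
(* length).                                                                 *)

Definition multilin (R : comPzRingType) (M V : lmodType R) (n : nat)
  (f : seq M -> V) : Prop :=
  forall (l1 l2 : seq M) r x y, (size l1 + (size l2).+1)%N = n ->
    f (l1 ++ (r *: x + y) :: l2) = r *: f (l1 ++ x :: l2) + f (l1 ++ y :: l2).

Fixpoint prodseq (T : Type) (ss : seq (seq T)) : seq (seq T) :=
  match ss with
  | [::] => [:: [::]]
  | s :: ss' => [seq x :: c | x <- s, c <- prodseq ss']
  end.

(* Sweedler expression  l_1^(1) ... l_k^(1) g(l_1^(2) (x) ... (x) l_k^(2))   *)
(* where delta x = x^(1) (x) x^(2).                                          *)
Definition sweed (R : comPzRingType) (X : Type) (Y : algType R) (Z : Type)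
  (delta : X -> seq (Y * Z)) (g : seq Z -> R) (l : seq X) : Y :=
  \sum_(c <- prodseq (map delta l)) g (map snd c) *: \prod_(x <- c) x.1.

(* replace the block of n entries starting at position i (1-based) by x *)
Definition ins (X : Type) (l : seq X) (i n : nat) (x : X) : seq X :=
  take i.-1 l ++ x :: drop (i.-1 + n) l.
Definition blk (X : Type) (l : seq X) (i n : nat) : seq X :=
  take n (drop i.-1 l).

Definition ocomp (R : comPzRingType) (H : algType R) (Delta : H -> seq (H * H))
  (f g : seq H -> R) (i n : nat) : seq H -> R :=
  fun l => f (ins l i n (sweed Delta g (blk l i n))).
Definition oid (R : comPzRingType) (H : algType R) (eps : H -> R) : seq H -> R :=
  fun l => eps (nth 0 l 0).
Definition omul (R : comPzRingType) (H : algType R) (eps : H -> R) : seq H -> R :=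
  fun l => eps (nth 0 l 0 * nth 0 l 1).
Definition oe (R : comPzRingType) (H : algType R) : seq H -> R := fun _ => 1.

Definition ecomp (R : comPzRingType) (A : algType R) (F G : seq A -> A) (i n : nat)
  : seq A -> A :=
  fun l => F (ins l i n (G (blk l i n))).
Definition eid (R : comPzRingType) (A : algType R) : seq A -> A :=
  fun l => nth 0 l 0.
Definition emul (R : comPzRingType) (A : algType R) : seq A -> A :=
  fun l => nth 0 l 0 * nth 0 l 1.
Definition ee (R : comPzRingType) (A : algType R) : seq A -> A := fun _ => 1.

Definition Phi (R : comPzRingType) (H A : algType R) (rho : A -> seq (A * H))
  (f : seq H -> R) : seq A -> A := sweed rho f.

(* Generic cochain operations for an operad with multiplication, given its *)
(* partial compositions comp f g i n (g of arity n) and multiplication mu.  *)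
Definition sgn (V : zmodType) (b : bool) (x : V) : V := if b then - x else x.

Section CochainOps.
Variables (X : Type) (V : zmodType).
Variable comp : (seq X -> V) -> (seq X -> V) -> nat -> nat -> seq X -> V.
Variable mu : seq X -> V.

Definition odiff (n : nat) (f : seq X -> V) : seq X -> V :=
  fun l => comp mu f 2 n l
           + \sum_(1 <= i < n.+1) sgn (odd i) (comp f mu i 2 l)
           + sgn (odd n.+1) (comp mu f 1 n l).

Definition ocup (m n : nat) (f g : seq X -> V) : seq X -> V :=
  comp (comp mu f 1 m) g m.+1 n.

(* f bar-o g = (-1)^{(m-1)(n-1)} sum_{i=1}^m (-1)^{(n-1)(i-1)} f o_i g;
   (-1)^{(m-1)(n-1)} = -1 iff m and n are both even (integer arithmetic) *)
Definition opre (m n : nat) (f g : seq X -> V) : seq X -> V :=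
  fun l => sgn (~~ odd m && ~~ odd n)
             (\sum_(1 <= i < m.+1) sgn (~~ odd n && ~~ odd i) (comp f g i n l)).

Definition obracket (m n : nat) (f g : seq X -> V) : seq X -> V :=
  fun l => opre m n f g l - sgn (~~ odd m && ~~ odd n) (opre n m g f l).
End CochainOps.

Definition multilinR (R : comPzRingType) (M : lmodType R) (n : nat)
  (f : seq M -> R) : Prop := @multilin R M R^o n f.

From HB Require Import structures.
From mathcomp Require Import all_boot all_order all_algebra zify.
Import GRing.Theory.
Local Open Scope ring_scope.

(* For a partial composition f o_i g, split the arguments into the block fed to
   g and the rest: outside the block both sides agree term by term, and inside
   it one must compute the coaction of Phi g (a_i, ..., a_{i+n-1}). Since rho
   is multiplicative, this is the product of the coactions of the a_j^(1), and
   coassociativity of rho, applied factor by factor, turns it into exactly the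
   Sweedler sum a^(1) (x) g(a^(2)^(2)) a^(2)^(1) that appears in f o_i g.
   The counit axiom and multiplicativity of eps give the identity and the
   multiplication; the differential, cup product and bracket are built from
   partial compositions and the multiplication, so they are preserved too. *)

Lemma big_prodseq_nil (V : nmodType) (T : Type) (F : seq T -> V) :
  \sum_(c <- prodseq [::]) F c = F [::].
Proof. by rewrite /= big_seq1. Qed.

Lemma big_prodseq_cons (V : nmodType) (T : Type) (s : seq T) (ss : seq (seq T))
  (F : seq T -> V) :
  \sum_(c <- prodseq (s :: ss)) F c = \sum_(x <- s) \sum_(c <- prodseq ss) F (x :: c).
Proof. by rewrite /= big_allpairs_dep. Qed.

Lemma big_prodseq_cat (V : nmodType) (T : Type) (ss1 ss2 : seq (seq T))
  (F : seq T -> V) :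
  \sum_(c <- prodseq (ss1 ++ ss2)) F c
  = \sum_(c1 <- prodseq ss1) \sum_(c2 <- prodseq ss2) F (c1 ++ c2).
Proof.
elim: ss1 F => [|s ss1 IH] F; first by rewrite big_prodseq_nil.
by rewrite cat_cons !big_prodseq_cons; apply: eq_bigr => x _; rewrite IH.
Qed.

Lemma eq_big_prodseq (V : nmodType) (T : Type) (ss : seq (seq T))
  (F G : seq T -> V) :
  (forall c, size c = size ss -> F c = G c) ->
  \sum_(c <- prodseq ss) F c = \sum_(c <- prodseq ss) G c.
Proof.
elim: ss F G => [|s ss IH] F G eqFG; first by rewrite !big_prodseq_nil eqFG.
rewrite !big_prodseq_cons; apply: eq_bigr => x _; apply: IH => c sc.
by apply: eqFG; rewrite /= sc.
Qed.

Lemma big_prodseq_flatten (V : nmodType) (X Z : Type) (ss : seq (seq X))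
  (K : X -> seq Z) (F : seq Z -> V) :
  \sum_(c <- prodseq ss) \sum_(t <- prodseq (map K c)) F t
  = \sum_(t <- prodseq (map (fun s => flatten (map K s)) ss)) F t.
Proof.
elim: ss F => [|s ss IH] F; first by rewrite /= !big_seq1.
rewrite !big_prodseq_cons big_flatten big_map; apply: eq_bigr => x _.
under [in RHS]eq_bigr => z _ do rewrite -(IH (fun t => F (z :: t))).
under [in LHS]eq_bigr => c _ do rewrite (@big_prodseq_cons _ _ (K x) (map K c)).
exact: exchange_big.
Qed.

(* Reindexing [(D (x) id)] and [(id (x) D)] applied factorwise. *)
Lemma big_prodseq_expand_fst (X Y Z W : Type) (D : X -> seq (Y * Z))
  (V : nmodType) (G : seq Y -> seq Z -> seq W -> V) (c : seq (X * W)) :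
  \sum_(t <- prodseq (map (fun x => [seq (y.1, y.2, x.2) | y <- D x.1]) c))
     G (map (fun y => y.1.1) t) (map (fun y => y.1.2) t) (map snd t)
  = \sum_(e <- prodseq (map D (map fst c))) G (map fst e) (map snd e) (map snd c).
Proof.
elim: c G => [|x c IH] G; first by rewrite /= !big_seq1.
rewrite (@big_prodseq_cons _ _ _ (map _ c)) (@big_prodseq_cons _ _ (D x.1)) big_map.
apply: eq_bigr => y _.
exact: (IH (fun s1 s2 s3 => G (y.1 :: s1) (y.2 :: s2) (x.2 :: s3))).
Qed.

Lemma big_prodseq_expand_snd (X Y Z W : Type) (D : W -> seq (Y * Z))
  (V : nmodType) (G : seq X -> seq Y -> seq Z -> V) (c : seq (X * W)) :
  \sum_(t <- prodseq (map (fun x => [seq (x.1, z.1, z.2) | z <- D x.2]) c))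
     G (map (fun y => y.1.1) t) (map (fun y => y.1.2) t) (map snd t)
  = \sum_(e <- prodseq (map D (map snd c))) G (map fst c) (map fst e) (map snd e).
Proof.
elim: c G => [|x c IH] G; first by rewrite /= !big_seq1.
rewrite (@big_prodseq_cons _ _ _ (map _ c)) (@big_prodseq_cons _ _ (D x.2)) big_map.
apply: eq_bigr => y _.
exact: (IH (fun s1 s2 s3 => G (x.1 :: s1) (y.1 :: s2) (y.2 :: s3))).
Qed.

Section Bilinear.
Variables (R : comPzRingType) (M N P : lmodType R) (b : M -> N -> P).
Hypothesis bilin_b : bilin b.

Lemma bilin0l y : b 0 y = 0.
Proof.
have := bilin_b.1 1 0 0 y; rewrite scaler0 addr0 scale1r => E.
by apply: (@addrI _ (b 0 y)); rewrite addr0 -E.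
Qed.

Lemma bilin0r x : b x 0 = 0.
Proof.
have := bilin_b.2 1 x 0 0; rewrite scaler0 addr0 scale1r => E.
by apply: (@addrI _ (b x 0)); rewrite addr0 -E.
Qed.

Lemma bilinZl r x y : b (r *: x) y = r *: b x y.
Proof. by have := bilin_b.1 r x 0 y; rewrite addr0 bilin0l addr0. Qed.

Lemma bilin_sumr (I : Type) (s : seq I) (r : I -> R) x (y : I -> N) :
  b x (\sum_(i <- s) r i *: y i) = \sum_(i <- s) r i *: b x (y i).
Proof.
elim: s => [|i s IH]; first by rewrite !big_nil bilin0r.
by rewrite !big_cons bilin_b.2 IH.
Qed.

End Bilinear.

Lemma teq3_big_prodseq (R : comPzRingType) (M N Q P : lmodType R) (I : Type)
  (L1 L2 : I -> seq (M * N * Q)) (js : seq I) (Psi : seq (M * N * Q) -> P) :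
  (forall i, teq3 (L1 i) (L2 i)) ->
  (forall pre post, (size pre + (size post).+1 = size js)%N ->
     trilin (fun a h k => Psi (pre ++ (a, h, k) :: post))) ->
  \sum_(t <- prodseq (map L1 js)) Psi t = \sum_(t <- prodseq (map L2 js)) Psi t.
Proof.
elim: js Psi => [|j js IH] Psi eqL trilinPsi; first by [].
rewrite (@big_prodseq_cons _ _ (L1 j)) (@big_prodseq_cons _ _ (L2 j)).
transitivity (\sum_(x <- L1 j) \sum_(c <- prodseq (map L2 js)) Psi (x :: c)).
  apply: eq_bigr => x _; apply: IH => // pre post sz.
  by apply: (trilinPsi (x :: pre)); rewrite /= addSn sz.
pose b a h k := \sum_(c <- prodseq (map L2 js)) Psi ((a, h, k) :: c).
have trilin_b : trilin b.
  have head_slot c : size c = size (map L2 js) -> trilin (fun a h k => Psi ((a, h, k) :: c)).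
    by rewrite size_map => sc; apply: (trilinPsi [::]); rewrite /= sc.
  split=> r *; rewrite /b scaler_sumr -big_split; apply: eq_big_prodseq => c sc /=;
    case: (head_slot c sc) => t1 t2 t3; [exact: t1 | exact: t2 | exact: t3].
transitivity (\sum_(x <- L1 j) b x.1.1 x.1.2 x.2); first by apply: eq_bigr => -[[]].
by rewrite (eqL j _ b trilin_b); apply: eq_bigr => -[[]].
Qed.

Lemma ins_cat (X : Type) (l1 l2 l3 : seq X) i n x :
  size l1 = i.-1 -> size l2 = n -> ins (l1 ++ l2 ++ l3) i n x = l1 ++ x :: l3.
Proof.
by move=> sz1 sz2; rewrite /ins -sz1 take_size_cat // -sz2 catA drop_size_cat // size_cat.
Qed.

Lemma blk_cat (X : Type) (l1 l2 l3 : seq X) i n :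
  size l1 = i.-1 -> size l2 = n -> blk (l1 ++ l2 ++ l3) i n = l2.
Proof. by move=> sz1 sz2; rewrite /blk -sz1 drop_size_cat // -sz2 take_size_cat. Qed.

Lemma size_ins (X : Type) (l : seq X) i n x :
  (0 < i)%N -> (i.-1 + n <= size l)%N -> size (ins l i n x) = (size l - n).+1.
Proof. by move=> *; rewrite /ins size_cat /= size_drop size_takel; lia. Qed.

Lemma size_blk (X : Type) (l : seq X) i n :
  (i.-1 + n <= size l)%N -> size (blk l i n) = n.
Proof. by move=> *; rewrite /blk size_takel // size_drop; lia. Qed.

Section EcompExt.
Variables (R : comPzRingType) (A : algType R).

Lemma eq_ecomp_outer (F F' G : seq A -> A) i n l :
  (0 < i)%N -> (i.-1 + n <= size l)%N ->
  (forall x, size x = (size l - n).+1 -> F x = F' x) ->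
  ecomp F G i n l = ecomp F' G i n l.
Proof. by move=> *; rewrite /ecomp; auto using size_ins. Qed.

Lemma eq_ecomp_inner (F G G' : seq A -> A) i n l :
  (i.-1 + n <= size l)%N -> (forall x, size x = n -> G x = G' x) ->
  ecomp F G i n l = ecomp F G' i n l.
Proof. by move=> le_l eqG; rewrite /ecomp eqG // size_blk. Qed.

End EcompExt.

Section PhiLinear.
Variables (R : comPzRingType) (H A : algType R) (rho : A -> seq (A * H)).

Lemma Phi_linear r (f g : seq H -> R) l :
  Phi rho (fun h => r * f h + g h) l = r *: Phi rho f l + Phi rho g l.
Proof.
rewrite /Phi /sweed scaler_sumr -big_split.
by apply: eq_bigr => c _; rewrite scalerDl scalerA.
Qed.

Lemma Phi_add (f g : seq H -> R) l :
  Phi rho (fun h => f h + g h) l = Phi rho f l + Phi rho g l.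
Proof. by rewrite /Phi /sweed -big_split; apply: eq_bigr => c _; rewrite scalerDl. Qed.

Lemma Phi_opp (f : seq H -> R) l : Phi rho (fun h => - f h) l = - Phi rho f l.
Proof. by rewrite /Phi /sweed -sumrN; apply: eq_bigr => c _; rewrite scaleNr. Qed.

Lemma Phi_sgn b (f : seq H -> R) l :
  Phi rho (fun h => sgn b (f h)) l = sgn b (Phi rho f l).
Proof. by case: b => //=; rewrite Phi_opp. Qed.

Lemma Phi_sum (I : Type) (s : seq I) (P : pred I) (F : I -> seq H -> R) l :
  Phi rho (fun h => \sum_(i <- s | P i) F i h) l = \sum_(i <- s | P i) Phi rho (F i) l.
Proof.
rewrite /Phi /sweed; under eq_bigr do rewrite scaler_suml.
exact: exchange_big.
Qed.

End PhiLinear.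

(* Linearity in the i-th argument only: all that [Phi_ocomp_at] needs of the
   outer cochain, and all we use of [omul o_1 f] in the cup product. *)
Definition linear_at {R : comPzRingType} {M : lmodType R} (m i : nat)
  (f : seq M -> R) : Prop :=
  forall pre post, size pre = i.-1 -> (size pre + (size post).+1 = m)%N ->
  forall r x y, f (pre ++ (r *: x + y) :: post) = r * f (pre ++ x :: post) + f (pre ++ y :: post).

Lemma mulr_linear_mid (R : comPzRingType) (A : algType R) (u v : A) r (a a' : A) :
  u * ((r *: a + a') * v) = r *: (u * (a * v)) + u * (a' * v).
Proof. by rewrite mulrDl mulrDr -scalerAl -scalerAr. Qed.

Section ComoduleAlgebra.
Context {R : comPzRingType} {H A : algType R}.
Context {Delta : H -> seq (H * H)} {eps : H -> R} {rho : A -> seq (A * H)}.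
Hypothesis comod_A : is_comodule_algebra Delta eps rho.

Lemma coact_sum {P : lmodType R} {b : A -> H -> P} (bilin_b : bilin b)
  (I : Type) (s : seq I) (r : I -> R) (a : I -> A) :
  \sum_(d <- rho (\sum_(i <- s) r i *: a i)) b d.1 d.2
  = \sum_(i <- s) r i *: \sum_(d <- rho (a i)) b d.1 d.2.
Proof.
have coactL r' x x' : \sum_(d <- rho (r' *: x + x')) b d.1 d.2
    = r' *: \sum_(d <- rho x) b d.1 d.2 + \sum_(d <- rho x') b d.1 d.2.
  rewrite (rho_lin comod_A r' x x' bilin_b) big_cat big_map scaler_sumr.
  by congr (_ + _); apply: eq_bigr => d _; rewrite bilinZl.
have coact0 : \sum_(d <- rho 0) b d.1 d.2 = 0.
  have := coactL 1 0 0; rewrite scaler0 addr0 scale1r => E.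
  by apply: (@addrI _ (\sum_(d <- rho 0) b d.1 d.2)); rewrite addr0 -E.
elim: s => [|i s IH]; first by rewrite !big_nil coact0.
by rewrite !big_cons coactL IH.
Qed.

Lemma coact_prod {P : lmodType R} {b : A -> H -> P} (bilin_b : bilin b) (s : seq A) :
  \sum_(d <- rho (\prod_(a <- s) a)) b d.1 d.2
  = \sum_(e <- prodseq (map rho s)) b (\prod_(x <- e) x.1) (\prod_(x <- e) x.2).
Proof.
elim: s P b bilin_b => [|a s IH] P b bilin_b.
  by rewrite big_nil big_prodseq_nil !big_nil (rho_one comod_A bilin_b) big_seq1.
rewrite big_cons (rho_mul comod_A _ _ bilin_b) big_allpairs_dep big_prodseq_cons.
apply: eq_bigr => x _.
have bilin_bx : bilin (fun a' h' => b (x.1 * a') (x.2 * h')).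
  by split=> r u u' v; rewrite mulrDr -scalerAr; [exact: bilin_b.1 | exact: bilin_b.2].
by rewrite (IH _ _ bilin_bx); apply: eq_bigr => e _; rewrite !big_cons.
Qed.

Lemma coact_Phi {n : nat} {g : seq H -> R} {s : seq A} {P : lmodType R}
  {b : A -> H -> P} : multilinR n g -> size s = n -> bilin b ->
  \sum_(d <- rho (Phi rho g s)) b d.1 d.2
  = \sum_(c <- prodseq (map rho s)) b (\prod_(x <- c) x.1) (sweed Delta g (map snd c)).
Proof.
move=> lin_g size_s bilin_b.
pose G (s1 : seq A) (s2 s3 : seq H) :=
  g s3 *: b (\prod_(a <- s1) a) (\prod_(h <- s2) h).
pose Psi (t : seq (A * H * H)) :=
  G (map (fun y => y.1.1) t) (map (fun y => y.1.2) t) (map snd t).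
pose K1 (x : A * H) := [seq (y.1, y.2, x.2) | y <- rho x.1].
pose K2 (x : A * H) := [seq (x.1, z.1, z.2) | z <- Delta x.2].
transitivity (\sum_(c <- prodseq (map rho s)) \sum_(t <- prodseq (map K1 c)) Psi t).
  rewrite /Phi /sweed (coact_sum bilin_b); apply: eq_bigr => c _.
  rewrite big_prodseq_expand_fst /G -scaler_sumr -(big_map fst xpredT id).
  by rewrite (coact_prod bilin_b); congr (_ *: _); apply: eq_bigr => e _; rewrite !big_map.
transitivity (\sum_(c <- prodseq (map rho s)) \sum_(t <- prodseq (map K2 c)) Psi t);
  last first.
  apply: eq_bigr => c _; rewrite big_prodseq_expand_snd /G /sweed.
  rewrite -(big_map fst xpredT id) bilin_sumr //; apply: eq_bigr => e _.
  by rewrite !big_map.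
rewrite !big_prodseq_flatten -!map_comp; apply: teq3_big_prodseq.
  by move=> x Q b' trilin_b'; rewrite (rho_coassoc comod_A x trilin_b').
move=> pre post; rewrite size_s => sz.
have sz' : (size (map snd pre) + (size (map snd post)).+1 = n)%N by rewrite !size_map.
rewrite /Psi /G; split=> r x x' y z; rewrite !map_cat /= !big_cat !big_cons /=.
- rewrite mulr_linear_mid bilin_b.1 !scalerDr !scalerA; congr (_ *: _ + _).
  by rewrite mulrC.
- rewrite mulr_linear_mid bilin_b.2 !scalerDr !scalerA; congr (_ *: _ + _).
  by rewrite mulrC.
- by rewrite lin_g // scalerDl !scalerA.
Qed.

Lemma Phi_ocomp_at {m n i : nat} {f g : seq H -> R} {l : seq A} :
  linear_at m i f -> multilinR n g -> (0 < i <= m)%N -> size l = (m + n).-1 ->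
  Phi rho (ocomp Delta f g i n) l = ecomp (Phi rho f) (Phi rho g) i n l.
Proof.
move=> lin_f lin_g /andP[i_gt0 i_le_m] size_l.
set l1 := take i.-1 l; set s := take n (drop i.-1 l); set l2 := drop (i.-1 + n) l.
have size_l1 : size l1 = i.-1 by rewrite size_takel //; lia.
have size_s : size s = n by rewrite size_takel // size_drop; lia.
have size_l2 : size l2 = (m - i)%N by rewrite size_drop; lia.
have -> : l = l1 ++ s ++ l2 by rewrite /l1 /s /l2 addnC -drop_drop !cat_take_drop.
rewrite /ecomp ins_cat // blk_cat // /Phi /sweed -/(Phi rho g s).
rewrite !map_cat map_cons !big_prodseq_cat.
apply: eq_big_prodseq => c1; rewrite size_map size_l1 => size_c1.
rewrite big_prodseq_cat big_prodseq_cons exchange_big [in RHS]exchange_big.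
apply: eq_big_prodseq => c2; rewrite size_map size_l2 => size_c2.
pose b a h := f (map snd c1 ++ h :: map snd c2)
  *: (\prod_(x <- c1) x.1 * (a * \prod_(x <- c2) x.1)).
have bilin_b : bilin b.
  split=> r x x' y; rewrite /b.
    by rewrite mulr_linear_mid scalerDr !scalerA mulrC.
  by rewrite lin_f ?size_map // ?scalerDl ?scalerA //; lia.
transitivity (\sum_(cs <- prodseq (map rho s))
               b (\prod_(x <- cs) x.1) (sweed Delta g (map snd cs))).
  apply: eq_big_prodseq => cs; rewrite size_map size_s => size_cs.
  by rewrite /ocomp /b !map_cat ins_cat ?blk_cat ?size_map // !big_cat.
rewrite -(coact_Phi lin_g size_s bilin_b).
by apply: eq_bigr => d _; rewrite map_cat big_cat big_cons.
Qed.

Lemma Phi_ocomp {m n i : nat} {f g : seq H -> R} {l : seq A} :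
  multilinR m f -> multilinR n g -> (0 < i <= m)%N -> size l = (m + n).-1 ->
  Phi rho (ocomp Delta f g i n) l = ecomp (Phi rho f) (Phi rho g) i n l.
Proof. by move=> lin_f; apply: Phi_ocomp_at => pre post _ sz r x y; exact: lin_f. Qed.

Lemma Phi_oid (a : A) : Phi rho (oid eps) [:: a] = a.
Proof.
rewrite /Phi /sweed big_prodseq_cons -[RHS](rho_counit comod_A).
by apply: eq_bigr => x _; rewrite big_prodseq_nil /oid big_seq1.
Qed.

Lemma Phi_obracket (m n : nat) (f g : seq H -> R) (l : seq A) :
  multilinR m f -> multilinR n g -> size l = (m + n).-1 ->
  Phi rho (obracket (ocomp Delta) m n f g) l
  = obracket (@ecomp R A) m n (Phi rho f) (Phi rho g) l.
Proof.
move=> lin_f lin_g size_l; rewrite /obracket /opre; cbv beta.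
rewrite Phi_add Phi_opp !Phi_sgn !Phi_sum; cbv beta.
congr (sgn _ _ - sgn _ (sgn _ _)); apply: eq_big_nat => i /andP[i_gt0 i_le];
  rewrite Phi_sgn.
  by rewrite (Phi_ocomp lin_f lin_g) // i_gt0.
by rewrite (Phi_ocomp lin_g lin_f) ?i_gt0 // addnC.
Qed.

End ComoduleAlgebra.

Lemma Phi_oe (R : comPzRingType) (H A : algType R) (rho : A -> seq (A * H)) :
  Phi rho (@oe R H) [::] = 1.
Proof. by rewrite /Phi /sweed big_prodseq_nil /oe big_nil scale1r. Qed.

Section Bialgebra.
Context {R : comPzRingType} {H A : algType R}.
Context {Delta : H -> seq (H * H)} {eps : H -> R} {rho : A -> seq (A * H)}.
Hypotheses (bialg_H : is_bialgebra Delta eps)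
           (comod_A : is_comodule_algebra Delta eps rho).

Lemma omul_multilin : multilinR 2 (omul eps).
Proof.
move=> [|x0 [|? ?]] [|y0 [|? ?]] r x y //= sz; try lia; rewrite /omul /=.
  by rewrite mulrDl -scalerAl (eps_lin bialg_H).
by rewrite mulrDr -scalerAr (eps_lin bialg_H).
Qed.

Lemma Phi_omul (l : seq A) : size l = 2 -> Phi rho (omul eps) l = emul l.
Proof.
case: l => [|a [|b [|? ?]]] // _.
rewrite /emul /= -[a in RHS](rho_counit comod_A) -[b in RHS](rho_counit comod_A).
rewrite /Phi /sweed big_prodseq_cons mulr_suml; apply: eq_bigr => x _.
rewrite big_prodseq_cons mulr_sumr; apply: eq_bigr => y _.
rewrite big_prodseq_nil /omul /= !big_cons big_nil mulr1 (eps_mul bialg_H).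
by rewrite -scalerA scalerAr scalerAl.
Qed.

Lemma Phi_ocomp_omul_outer {n i : nat} {f : seq H -> R} {l : seq A} :
  multilinR n f -> (0 < i <= 2)%N -> size l = n.+1 ->
  Phi rho (ocomp Delta (omul eps) f i n) l = ecomp (@emul R A) (Phi rho f) i n l.
Proof.
move=> lin_f /andP[i_gt0 i_le2] size_l.
rewrite (Phi_ocomp comod_A omul_multilin lin_f) ?i_gt0 //.
apply: eq_ecomp_outer => // [|x]; first by rewrite size_l; lia.
by rewrite size_l => size_x; apply: Phi_omul; rewrite size_x; lia.
Qed.

Lemma Phi_ocomp_omul_inner {m i : nat} {f : seq H -> R} {l : seq A} :
  multilinR m f -> (0 < i <= m)%N -> size l = m.+1 ->
  Phi rho (ocomp Delta f (omul eps) i 2) l = ecomp (Phi rho f) (@emul R A) i 2 l.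
Proof.
move=> lin_f le_im size_l.
rewrite (Phi_ocomp comod_A lin_f omul_multilin) //; last by rewrite size_l addn2.
by apply: eq_ecomp_inner => //; [rewrite size_l; lia | exact: Phi_omul].
Qed.

Lemma ocomp_omul_linear_last (m : nat) (f : seq H -> R) :
  linear_at m.+1 m.+1 (ocomp Delta (omul eps) f 1 m).
Proof.
move=> pre post size_pre sz.
have /size0nil -> : size post = 0%N by rewrite size_pre in sz; lia.
move=> r x y; rewrite /ocomp /ins /blk !take0 !drop0 !(take_size_cat _ size_pre).
rewrite !add0n !(drop_size_cat _ size_pre) /omul /=.
by rewrite mulrDr -scalerAr (eps_lin bialg_H).
Qed.

Lemma Phi_odiff (n : nat) (f : seq H -> R) (l : seq A) :
  multilinR n f -> size l = n.+1 ->
  Phi rho (odiff (ocomp Delta) (omul eps) n f) l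
  = odiff (@ecomp R A) (@emul R A) n (Phi rho f) l.
Proof.
move=> lin_f size_l; rewrite /odiff Phi_add Phi_add Phi_sum Phi_sgn; cbv beta.
congr (_ + _ + _); last by rewrite Phi_ocomp_omul_outer.
  exact: Phi_ocomp_omul_outer.
apply: eq_big_nat => i /andP[i_gt0 i_le]; rewrite Phi_sgn (Phi_ocomp_omul_inner lin_f) //.
by rewrite i_gt0; lia.
Qed.

Lemma Phi_ocup (m n : nat) (f g : seq H -> R) (l : seq A) :
  multilinR m f -> multilinR n g -> size l = (m + n)%N ->
  Phi rho (ocup (ocomp Delta) (omul eps) m n f g) l
  = ocup (@ecomp R A) (@emul R A) m n (Phi rho f) (Phi rho g) l.
Proof.
move=> lin_f lin_g size_l; rewrite /ocup.
have size_l' : size l = (m.+1 + n).-1 by rewrite size_l addSn.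
rewrite (Phi_ocomp_at comod_A (ocomp_omul_linear_last m f) lin_g (leqnn _) size_l').
apply: eq_ecomp_outer => // [|x]; first by rewrite size_l; lia.
by rewrite size_l => size_x; apply: Phi_ocomp_omul_outer => //; rewrite size_x; lia.
Qed.

End Bialgebra.

Theorem lemma7p2 (R : comPzRingType) (H A : algType R)
  (Delta : H -> seq (H * H)) (eps : H -> R) (rho : A -> seq (A * H)) :
  is_bialgebra Delta eps ->
  is_comodule_algebra Delta eps rho ->
  (  [/\ (* Phi is k-linear in each arity *)
   (forall (r : R) (f g : seq H -> R) (l : seq A),
      Phi rho (fun h => r * f h + g h) l = r *: Phi rho f l + Phi rho g l),
   (* Phi commutes with the partial compositions *)
   (forall (m n i : nat) (f g : seq H -> R), multilinR m f -> multilinR n g ->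
      (0 < i <= m)%N -> forall l : seq A, size l = (m + n).-1 ->
      Phi rho (ocomp Delta f g i n) l = ecomp (Phi rho f) (Phi rho g) i n l),
   (* Phi preserves the identity, the multiplication and the unit e *)
   (forall a : A, Phi rho (oid eps) [:: a] = a),
   (forall a b : A, Phi rho (omul eps) [:: a; b] = a * b) &
   (Phi rho (@oe R H) [::] = 1)] /\
   (* hence, on cochains, Phi commutes with d, cup product and bracket *)
   [/\ (forall (n : nat) (f : seq H -> R), multilinR n f ->
          forall l : seq A, size l = n.+1 ->
          Phi rho (odiff (ocomp Delta) (omul eps) n f) l
          = odiff (@ecomp R A) (@emul R A) n (Phi rho f) l),
       (forall (m n : nat) (f g : seq H -> R), multilinR m f -> multilinR n g ->
          forall l : seq A, size l = (m + n)%N ->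
          Phi rho (ocup (ocomp Delta) (omul eps) m n f g) l
          = ocup (@ecomp R A) (@emul R A) m n (Phi rho f) (Phi rho g) l) &
       (forall (m n : nat) (f g : seq H -> R), multilinR m f -> multilinR n g ->
          forall l : seq A, size l = (m + n).-1 ->
          Phi rho (obracket (ocomp Delta) m n f g) l
          = obracket (@ecomp R A) m n (Phi rho f) (Phi rho g) l)]).
Proof.
move=> bialg_H comod_A; split; split.
- exact: Phi_linear.
- by move=> m n i f g lin_f lin_g le_im l; apply: (Phi_ocomp comod_A lin_f lin_g le_im).
- exact: (Phi_oid comod_A).
- by move=> a b; apply: (Phi_omul bialg_H comod_A).
- exact: Phi_oe.
- by move=> n f lin_f l; apply: (Phi_odiff bialg_H comod_A).
- by move=> m n f g lin_f lin_g l; apply: (Phi_ocup bialg_H comod_A).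
- by move=> m n f g lin_f lin_g l; apply: (Phi_obracket comod_A).
Qed.
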